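(* Let $\tau\in\mathbb{R}\setminus\mathbb{Q}$ and $\bar\varphi\in\mathbb{T}$, and put $\bar\varphi'=R_{1/2}\bar\varphi$. Then there exists a Denjoy map $f:\mathbb{T}\to\mathbb{T}$ such that: (a) $f$ is $\mathbb{Z}_2$-equivariant, i.e. $f\circ R_{1/2}=R_{1/2}\circ f$; (b) the rotation number of $f$ is $\rho(f)=\bar\tau$; (c) the minimal Cantor set $C$ of $f$ satisfies $R_{1/2}C=C$, and there is a Cantor function $\mathcal{P}$ associated to $C$ with $\mathcal{P}\circ R_{1/2}=R_{1/2}\circ\mathcal{P}$, $\mathcal{P}(A)=\{\overline{\varphi+n\tau}:n\in\mathbb{Z}\}\cup\{\overline{\varphi'+n\tau}:n\in\mathbb{Z}\}$ ($A$ the accessible set of $C$), and $\mathcal{P}\circ f=R_{\bar\tau}\circ\mathcal{P}$.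
   Context: $\mathbb{T}=\mathbb{R}/\mathbb{Z}$ with points $\bar\theta=\theta+\mathbb{Z}$; $R_{\bar\eta}(\bar\theta)=\overline{\theta+\eta}$. A Denjoy map is an orientation preserving homeomorphism of $\mathbb{T}$ with irrational rotation number which is not topologically conjugate to any rotation; such a map has a unique minimal set, which is a Cantor set. A Cantor set is a compact, totally disconnected, perfect subset $C\subset\mathbb{T}$, written $C=\mathbb{T}\setminus\bigcup_{k\ge0}\dot\alpha_k$ with $\{\alpha_k\}$ pairwise disjoint closed arcs; its accessible set $A$ is the set of endpoints of all $\alpha_k$. $\bar\theta_1\sim\bar\theta_2$ means equal or in the same $\alpha_k$. A Cantor function associated to $C$ is a continuous, cyclic-order-preserving map $\mathcal{P}:\mathbb{T}\to\mathbb{T}$ with $\mathcal{P}(\bar\theta_1)=\mathcal{P}(\bar\theta_2)$ iff $\bar\theta_1\sim\bar\theta_2$. A map $g:\mathbb{T}\to\mathbb{T}$ is $\mathbb{Z}_m$-equivariant if $g(\bar\theta+\tfrac1m)=g(\bar\theta)+\tfrac1m$ for all $\bar\theta$. *)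

(* the circle T = R/Z is handled through real representatives
   and lifts of circle maps to R. *)
From Stdlib Require Export Reals.
Open Scope R_scope.

Definition eqT (x y : R) : Prop := exists k : Z, y - x = IZR k.

Definition irrational (x : R) : Prop :=
  ~ exists p q : Z, q <> 0%Z /\ x = IZR p / IZR q.

(* F : R -> R is a lift of an orientation preserving homeomorphism of T *)
Definition circle_homeo_plus (F : R -> R) : Prop :=
  continuity F /\ (forall x y, x < y -> F x < F y) /\
  (forall x, F (x + 1) = F x + 1).

(* H : R -> R is a lift of a homeomorphism of T (orientation preserving or
   reversing) *)
Definition circle_homeo (H : R -> R) : Prop :=
  continuity H /\
  (((forall x y, x < y -> H x < H y) /\ (forall x, H (x + 1) = H x + 1)) \/
   ((forall x y, x < y -> H y < H x) /\ (forall x, H (x + 1) = H x - 1))).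

(* rotation number (as a real number; the rotation number in T is its class) *)
Definition rot_num (F : R -> R) (r : R) : Prop :=
  forall x, Un_cv (fun n => (Nat.iter (S n) F x - x) / INR (S n)) r.

Definition conj_to_rotation (F : R -> R) : Prop :=
  exists (H : R -> R) (alpha : R), circle_homeo H /\
    forall x, eqT (H (F x)) (H x + alpha).

Definition denjoy_map (F : R -> R) : Prop :=
  circle_homeo_plus F /\
  (exists r, rot_num F r /\ irrational r) /\
  ~ conj_to_rotation F.

(* subsets of T are represented by 1-periodic subsets of R *)
Definition circ_set (C : R -> Prop) : Prop := forall x, C x <-> C (x + 1).

Definition closed_set (C : R -> Prop) : Prop :=
  forall x, (forall eps, 0 < eps -> exists y, C y /\ Rabs (y - x) < eps) -> C x.

Definition invariant (F : R -> R) (C : R -> Prop) : Prop :=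
  forall x, C x <-> C (F x).

Definition minimal_set (F : R -> R) (C : R -> Prop) : Prop :=
  circ_set C /\ closed_set C /\ (exists x, C x) /\ invariant F C /\
  forall D : R -> Prop,
    circ_set D -> closed_set D -> (exists x, D x) -> invariant F D ->
    (forall x, D x -> C x) -> forall x, C x -> D x.

(* Cantor set in T: compact (closed), totally disconnected (contains no
   nondegenerate arc), perfect, nonempty *)
Definition cantor_set (C : R -> Prop) : Prop :=
  circ_set C /\ closed_set C /\ (exists x, C x) /\
  (forall a b, a < b -> exists y, a <= y <= b /\ ~ C y) /\
  (forall x, C x -> forall eps, 0 < eps ->
     exists y, C y /\ y <> x /\ Rabs (y - x) < eps).

(* [a,b] is (a lift of) one of the closed complementary arcs alpha_k *)
Definition gap (C : R -> Prop) (a b : R) : Prop :=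
  a < b /\ C a /\ C b /\ forall y, a < y < b -> ~ C y.

Definition accessible (C : R -> Prop) (x : R) : Prop :=
  exists y, gap C x y \/ gap C y x.

Definition simC (C : R -> Prop) (t1 t2 : R) : Prop :=
  eqT t1 t2 \/
  exists (k1 k2 : Z) (a b : R), gap C a b /\
    a <= t1 + IZR k1 <= b /\ a <= t2 + IZR k2 <= b.

(* P : R -> R lifts a Cantor function associated to C: a continuous
   cyclic-order-preserving (degree one, nondecreasing lift) map T -> T
   with P t1 = P t2 in T iff t1 ~ t2 *)
Definition cantor_function (C : R -> Prop) (P : R -> R) : Prop :=
  continuity P /\ (forall x y, x <= y -> P x <= P y) /\
  (forall x, P (x + 1) = P x + 1) /\
  forall t1 t2, eqT (P t1) (P t2) <-> simC C t1 t2.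

(* Circle maps are handled through their lifts to R, and the construction runs
   backwards from the semi-conjugacy.  Let G be strictly increasing, commuting
   with the half-turn x |-> x + 1/2, with jumps exactly over the set J of
   points v with 2 v = 2 (phi + n tau) mod 1, i.e. over the two orbits above;
   G is a devil's staircase v |-> (2 v + sum_k 2^-k floor (2 v - s_k)) / 6,
   where s_k enumerates 2 (phi + Z tau) mod 1.  Its generalised inverse P is a
   continuous monotone degree-one map whose fibres are points, except over J
   where they are the intervals [G(v-), G(v+)].  The map F sending the fibre
   over v affinely onto the fibre over v + tau is then an orientation
   preserving circle homeomorphism with P F = P + tau (so its rotation number
   is tau) commuting with the half-turn.  As J is dense, the points where P is
   not locally constant form the unique minimal set E of F; E is a Cantor set
   whose gaps are the nondegenerate fibres, so P is a Cantor function for E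
   sending its accessible set onto J.  F is not conjugate to a rotation, since
   a conjugacy would make an iterate of F send a point of a gap into that gap. *)

From Stdlib Require Import Reals Lra Lia ZArith ClassicalEpsilon Classical
  FunctionalExtensionality PropExtensionality.
From Coquelicot Require Import Coquelicot.
Open Scope R_scope.

Lemma eqT_refl x : eqT x x.
Proof. exists 0%Z. simpl; ring. Qed.

Lemma eqT_trans x y z : eqT x y -> eqT y z -> eqT x z.
Proof. intros [k H] [k' H']. exists (k + k')%Z. rewrite plus_IZR. lra. Qed.

Lemma periodic_int (Q : R -> Prop) : (forall y, Q (y + 1) <-> Q y) ->
  forall k x, Q (x + IZR k) <-> Q x.
Proof.
  intros HQ k. induction k as [|k IHk|k IHk] using Z.peano_ind; intros x.
  - rewrite Rplus_0_r. tauto.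
  - rewrite succ_IZR, <- Rplus_assoc, HQ. apply IHk.
  - rewrite <- Z.sub_1_r, minus_IZR.
    replace (x + (IZR k - 1)) with (x - 1 + IZR k) by ring.
    rewrite IHk, <- HQ. replace (x - 1 + 1) with x by ring. tauto.
Qed.

Lemma shift_int (f : R -> R) : (forall x, f (x + 1) = f x + 1) ->
  forall x k, f (x + IZR k) = f x + IZR k.
Proof.
  intros Hf x k.
  assert (Hp : forall y, f (y + 1) - (y + 1) = f x - x <-> f y - y = f x - x).
  { intros y. rewrite Hf. split; intros; lra. }
  pose proof (proj2 (periodic_int _ Hp k x) eq_refl). lra.
Qed.

Lemma half_one (f : R -> R) : (forall x, f (x + / 2) = f x + / 2) ->
  forall x, f (x + 1) = f x + 1.
Proof. intros H x. replace (x + 1) with (x + / 2 + / 2) by field. rewrite !H. field. Qed.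

Lemma homeo_inj (H : R -> R) : circle_homeo H -> forall x y, eqT (H x) (H y) -> eqT x y.
Proof.
  intros [_ [[Hm Hp]|[Hm Hp]]] x y [k Hk].
  - pose proof (shift_int H Hp x k). exists k.
    destruct (Rtotal_order y (x + IZR k)) as [Hl|[He|Hg]];
      [apply Hm in Hl; lra | lra | apply Hm in Hg; lra].
  - assert (Hp' : forall x, - H (x + 1) = - H x + 1) by (intros; rewrite Hp; ring).
    pose proof (shift_int (fun x => - H x) Hp' x (- k)) as Hs. simpl in Hs.
    rewrite opp_IZR in Hs. exists (- k)%Z. rewrite opp_IZR.
    destruct (Rtotal_order y (x + - IZR k)) as [Hl|[He|Hg]];
      [apply Hm in Hl; lra | lra | apply Hm in Hg; lra].
Qed.

Definition fl (x : R) : R := IZR (Zfloor x).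

Lemma fl_bound x : fl x <= x < fl x + 1.
Proof. apply Zfloor_bound. Qed.

Lemma fl_shift x : fl (x + 1) = fl x + 1.
Proof. unfold fl. rewrite (Zfloor_addz 1), plus_IZR. reflexivity. Qed.

Lemma fl_le x y : x <= y -> fl x <= fl y.
Proof. intros; apply IZR_le, Zfloor_le; assumption. Qed.

Lemma fl_abs y : Rabs (fl y) <= Rabs y + 1.
Proof. destruct (fl_bound y). unfold Rabs; repeat destruct Rcase_abs; lra. Qed.

Lemma fl_diff_le1 x y : x <= y < x + 1 -> fl y - fl x <= 1.
Proof.
  intros H. destruct (fl_bound x), (fl_bound y). unfold fl in *.
  rewrite <- minus_IZR. apply IZR_le.
  assert (Hlt : IZR (Zfloor y) < IZR (Zfloor x + 2)) by (rewrite plus_IZR; lra).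
  apply lt_IZR in Hlt. lia.
Qed.

Lemma fl_locally_const x : (forall m : Z, x <> IZR m) ->
  exists eta, 0 < eta /\ forall y, Rabs (y - x) < eta -> fl y = fl x.
Proof.
  intros H. destruct (fl_bound x). assert (fl x <> x) by (unfold fl; auto).
  exists (Rmin (x - fl x) (fl x + 1 - x)). split; [apply Rmin_glb_lt; lra|].
  intros y Hy. unfold fl at 1 2. rewrite (Zfloor_eq (Zfloor x) y); [reflexivity|]. fold (fl x).
  pose proof (Rmin_l (x - fl x) (fl x + 1 - x)). pose proof (Rmin_r (x - fl x) (fl x + 1 - x)).
  revert Hy; unfold Rabs; destruct Rcase_abs; intros; lra.
Qed.

Lemma nat_above y : 0 <= y -> exists N : nat, INR N - 1 <= y < INR N.
Proof.
  intros Hy. pose proof (Zfloor_bound y).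
  assert (Hf : (0 <= Zfloor y + 1)%Z) by (apply le_IZR; rewrite plus_IZR; lra).
  exists (Z.to_nat (Zfloor y + 1)). rewrite INR_IZR_INZ, Z2Nat.id, plus_IZR by assumption. lra.
Qed.

Lemma pigeonhole K (f : nat -> nat) : (forall i, (i <= K)%nat -> (f i < K)%nat) ->
  exists i j, (i < j <= K)%nat /\ f i = f j.
Proof.
  revert f. induction K as [|K IHK]; intros f Hf.
  - specialize (Hf 0%nat ltac:(lia)). lia.
  - set (c := f (S K)).
    destruct (classic (exists i, (i <= K)%nat /\ f i = c)) as [[i [Hi Hc]]|Hn].
    + exists i, (S K). split; [lia|exact Hc].
    + (* squeeze the values of f on {0,...,K} into {0,...,K-1} by closing the
         hole at c *)
      assert (Hnc : forall i, (i <= K)%nat -> f i <> c) by (intros i Hi Hc; apply Hn; eauto).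
      set (f' := fun i => if Nat.ltb (f i) c then f i else (f i - 1)%nat).
      destruct (IHK f') as [i [j [Hij Heq]]].
      { intros i Hi. specialize (Hnc i Hi).
        assert (f i < S K)%nat by (apply Hf; lia). assert (c < S K)%nat by (apply Hf; lia).
        unfold f'. destruct (Nat.ltb_spec (f i) c); lia. }
      exists i, j. split; [lia|].
      pose proof (Hnc i ltac:(lia)). pose proof (Hnc j ltac:(lia)).
      unfold f' in Heq. destruct (Nat.ltb_spec (f i) c), (Nat.ltb_spec (f j) c); lia.
Qed.

Lemma close_pair (t : nat -> R) (K : nat) : (0 < K)%nat -> (forall i, 0 <= t i < 1) ->
  exists i j, (i < j <= K)%nat /\ Rabs (t i - t j) < / INR K.
Proof.
  intros HK Ht. assert (HKr : 0 < INR K) by (apply lt_0_INR; assumption).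
  set (box := fun i => Zfloor (INR K * t i)).
  assert (Hbox : forall i, (0 <= box i < Z.of_nat K)%Z /\
                           IZR (box i) <= INR K * t i < IZR (box i) + 1).
  { intros i. pose proof (Zfloor_bound (INR K * t i)) as Hb. destruct (Ht i).
    assert (0 <= INR K * t i < INR K) by nra. fold (box i) in Hb. split; [|exact Hb].
    rewrite INR_IZR_INZ in *. split.
    - assert (Hm1 : IZR (-1) < IZR (box i)) by lra. apply lt_IZR in Hm1. lia.
    - apply lt_IZR. lra. }
  destruct (pigeonhole K (fun i => Z.to_nat (box i))) as [i [j [Hij Hf]]].
  { intros i _. destruct (Hbox i) as [Hi _]. lia. }
  exists i, j. split; [exact Hij|].
  destruct (Hbox i) as [Hi [Hi1 Hi2]], (Hbox j) as [Hj [Hj1 Hj2]].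
  assert (Hij' : box i = box j) by lia. rewrite Hij' in Hi1, Hi2.
  apply (Rmult_lt_reg_l (INR K)); [exact HKr|]. rewrite Rinv_r by lra.
  rewrite <- (Rabs_pos_eq (INR K)) at 1 by lra. rewrite <- Rabs_mult.
  unfold Rabs; destruct Rcase_abs; lra.
Qed.

Lemma dirichlet (alpha d : R) : 0 < d ->
  exists (q : nat) (m : Z), (0 < q)%nat /\ Rabs (INR q * alpha - IZR m) < d.
Proof.
  intros Hd. destruct (nat_above (/ d)) as [K [HK1 HK2]].
  { left; apply Rinv_0_lt_compat; assumption. }
  assert (HK : (0 < K)%nat).
  { destruct K; [|lia]. simpl in HK2. pose proof (Rinv_0_lt_compat d Hd). lra. }
  set (t := fun i => INR i * alpha - fl (INR i * alpha)).
  destruct (close_pair t K HK) as [i [j [Hij Hc]]].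
  { intros i. unfold t. pose proof (fl_bound (INR i * alpha)). lra. }
  exists (j - i)%nat, (Zfloor (INR j * alpha) - Zfloor (INR i * alpha))%Z. split; [lia|].
  rewrite minus_INR, minus_IZR by lia.
  replace ((INR j - INR i) * alpha - (IZR (Zfloor (INR j * alpha)) - IZR (Zfloor (INR i * alpha))))
    with (- (t i - t j)) by (unfold t, fl; ring).
  rewrite Rabs_Ropp. apply Rlt_le_trans with (/ INR K); [exact Hc|].
  rewrite <- (Rinv_inv d). apply Rinv_le_contravar; [apply Rinv_0_lt_compat; exact Hd | lra].
Qed.

Lemma step_hits_pos (delta x0 l r : R) : 0 < delta < r - l ->
  exists (N : nat) (k : Z), l < x0 + INR N * delta + IZR k < r.
Proof.
  intros Hd. pose proof (fl_bound (l - x0)) as Hk0.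
  destruct (nat_above ((l - x0 - fl (l - x0)) / delta)) as [N [HN1 HN2]].
  { apply Rdiv_le_0_compat; lra. }
  exists N, (Zfloor (l - x0)). fold (fl (l - x0)).
  set (y := (l - x0 - fl (l - x0)) / delta) in *.
  assert (Hy : y * delta = l - x0 - fl (l - x0)) by (unfold y; field; lra).
  nra.
Qed.

Lemma step_hits (delta x0 l r : R) : 0 < Rabs delta < r - l ->
  exists (N : nat) (k : Z), l < x0 + INR N * delta + IZR k < r.
Proof.
  intros Hd. destruct (Rle_or_lt 0 delta) as [Hp|Hn].
  - rewrite Rabs_pos_eq in Hd by exact Hp. apply step_hits_pos. lra.
  - (* reflect x |-> -x to reduce to a positive step *)
    rewrite Rabs_left in Hd by exact Hn.
    destruct (step_hits_pos (- delta) (- x0) (- r) (- l)) as [N [k Hk]]; [lra|].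
    exists N, (- k)%Z. rewrite opp_IZR. lra.
Qed.

Lemma irrational_mult_nonint (tau : R) (q : nat) (m : Z) : irrational tau -> (0 < q)%nat ->
  INR q * tau - IZR m <> 0.
Proof.
  intros Hi Hq Heq. apply Hi. exists m, (Z.of_nat q). split; [lia|].
  rewrite <- INR_IZR_INZ. assert (0 < INR q) by (apply lt_0_INR; assumption).
  apply Rmult_eq_reg_l with (INR q); [|lra]. field_simplify; lra.
Qed.

Lemma dense_orbit (tau c l r : R) : irrational tau -> l < r ->
  exists (n : nat) (k : Z), l < c + INR n * tau + IZR k < r.
Proof.
  intros Hi Hlr. destruct (dirichlet tau (r - l)) as [q [m [Hq Ha]]]; [lra|].
  destruct (step_hits (INR q * tau - IZR m) c l r) as [N [k Hk]].
  { split; [apply Rabs_pos_lt, irrational_mult_nonint|]; assumption. }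
  exists (N * q)%nat, (k - Z.of_nat N * m)%Z.
  rewrite mult_INR, minus_IZR, mult_IZR, <- INR_IZR_INZ.
  replace (c + INR N * INR q * tau + (IZR k - INR N * IZR m))
    with (c + INR N * (INR q * tau - IZR m) + IZR k) by ring.
  exact Hk.
Qed.

Lemma mono_surj_cont (f : R -> R) : (forall x y, x < y -> f x < f y) ->
  (forall z, exists x, f x = z) -> continuity f.
Proof.
  intros Hm Hs x eps Heps.
  destruct (Hs (f x - eps)) as [x1 H1], (Hs (f x + eps)) as [x2 H2].
  assert (x1 < x).
  { destruct (Rlt_or_le x1 x) as [|Hle]; [assumption|].
    destruct Hle as [Hlt| <-]; [apply Hm in Hlt|]; lra. }
  assert (x < x2).
  { destruct (Rlt_or_le x x2) as [|Hle]; [assumption|].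
    destruct Hle as [Hlt| ->]; [apply Hm in Hlt|]; lra. }
  exists (Rmin (x - x1) (x2 - x)). split; [apply Rmin_glb_lt; lra|].
  intros y [_ Hy]. simpl in *. unfold R_dist in *.
  pose proof (Rmin_l (x - x1) (x2 - x)). pose proof (Rmin_r (x - x1) (x2 - x)).
  assert (x1 < y < x2) by (revert Hy; unfold Rabs; destruct Rcase_abs; intros; lra).
  assert (f x1 < f y) by (apply Hm; lra). assert (f y < f x2) by (apply Hm; lra).
  unfold Rabs; destruct Rcase_abs; lra.
Qed.

Lemma realise_displacement (H : R -> R) a b e : continuity H -> a <= b ->
  Rabs e <= Rabs (H b - H a) -> exists x y, a <= x <= b /\ a <= y <= b /\ H y = H x + e.
Proof.
  intros Hc Hab He.
  assert (Hivt : forall t, Rmin (H a) (H b) <= t <= Rmax (H a) (H b) ->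
                 exists y, a <= y <= b /\ H y = t).
  { intros t Ht. destruct (IVT_cor (fun x => H x - t) a b) as [y [Hy Hyt]].
    - apply continuity_minus; [exact Hc | apply continuity_const; intros ? ?; reflexivity].
    - exact Hab.
    - unfold Rmin, Rmax in Ht. destruct (Rle_dec (H a) (H b)); nra.
    - exists y. split; [exact Hy | lra]. }
  (* start from the endpoint from which the displacement stays in range *)
  destruct (Rle_dec 0 (e * (H b - H a))) as [Hs|Hs].
  - destruct (Hivt (H a + e)) as [y [Hy Hy']].
    { unfold Rmin, Rmax, Rabs in *; destruct Rle_dec; repeat destruct Rcase_abs; nra. }
    exists a, y. repeat split; lra.
  - destruct (Hivt (H b + e)) as [y [Hy Hy']].
    { unfold Rmin, Rmax, Rabs in *; destruct Rle_dec; repeat destruct Rcase_abs; nra. }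
    exists b, y. repeat split; lra.
Qed.

Definition weight (k : nat) : R := (/ 2) ^ k.

Lemma weight_pos k : 0 < weight k.
Proof. apply pow_lt; lra. Qed.

Lemma is_series_weight : is_series weight 2.
Proof.
  assert (Hq : Rabs (/ 2) < 1) by (rewrite Rabs_pos_eq; lra).
  pose proof (is_series_geom _ Hq) as H. replace (/ (1 - / 2)) with 2 in H by field. exact H.
Qed.

Lemma ex_series_dom a c : (forall k, Rabs (a k) <= c * weight k) -> ex_series a.
Proof.
  intros H. apply (ex_series_le a (fun k => c * weight k)); [exact H|].
  apply (ex_series_scal_l c weight). eexists; apply is_series_weight.
Qed.

Lemma Series_nonneg a : (forall k, 0 <= a k) -> ex_series a -> 0 <= Series a.
Proof.
  intros H He. replace 0 with (Series (fun _ => 0 * weight 0)).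
  - apply Series_le; [intros k; rewrite Rmult_0_l; split; [lra | apply H] | exact He].
  - rewrite Series_scal_l. ring.
Qed.

Lemma Series_term_le a j : (forall k, 0 <= a k) -> ex_series a -> a j <= Series a.
Proof.
  intros H He. rewrite (Series_incr_n a (S j)); [|lia|exact He]. simpl.
  assert (0 <= Series (fun k => a (S (j + k)))).
  { apply Series_nonneg; [intros; apply H | exact (proj1 (ex_series_incr_n a (S j)) He)]. }
  destruct j as [|j]; simpl in *; [lra|].
  assert (0 <= sum_f_R0 a j) by (apply cond_pos_sum; exact H). lra.
Qed.

Section Staircase.
Variable s : nat -> R.
Hypothesis s_bd : forall k, 0 <= s k < 1.

Definition stair_term (u : R) (k : nat) : R := weight k * fl (u - s k).
Definition stair (u : R) : R := Series (stair_term u).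

Lemma stair_term_bound u k : Rabs (stair_term u k) <= (Rabs u + 2) * weight k.
Proof.
  unfold stair_term. rewrite Rabs_mult, (Rabs_pos_eq (weight k)) by (left; apply weight_pos).
  rewrite Rmult_comm. apply Rmult_le_compat_r; [left; apply weight_pos|].
  eapply Rle_trans; [apply fl_abs|]. destruct (s_bd k).
  unfold Rabs; repeat destruct Rcase_abs; lra.
Qed.

Lemma ex_stair_term u : ex_series (stair_term u).
Proof. apply (ex_series_dom _ (Rabs u + 2)), stair_term_bound. Qed.

Lemma stair_shift u : stair (u + 1) = stair u + 2.
Proof.
  unfold stair. rewrite (Series_ext _ (fun k => stair_term u k + weight k)).
  - rewrite Series_plus, (is_series_unique _ _ is_series_weight);
      [reflexivity | apply ex_stair_term |].
    eexists; apply is_series_weight.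
  - intros k. unfold stair_term. replace (u + 1 - s k) with (u - s k + 1) by ring.
    rewrite fl_shift. ring.
Qed.

Definition incr_term (u u' : R) (k : nat) : R := weight k * (fl (u' - s k) - fl (u - s k)).

Lemma ex_incr_term u u' : ex_series (incr_term u u').
Proof.
  apply (ex_series_dom _ ((Rabs u' + 2) + (Rabs u + 2))). intros k.
  replace (incr_term u u' k) with (stair_term u' k - stair_term u k)
    by (unfold incr_term, stair_term; ring).
  eapply Rle_trans; [apply Rabs_triang|]. rewrite Rabs_Ropp.
  pose proof (stair_term_bound u k); pose proof (stair_term_bound u' k). lra.
Qed.

Lemma stair_incr u u' : stair u' - stair u = Series (incr_term u u').
Proof.
  unfold stair. rewrite <- Series_minus by apply ex_stair_term.
  apply Series_ext. intros; unfold stair_term, incr_term; ring.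
Qed.

Lemma incr_term_nonneg u u' k : u <= u' -> 0 <= incr_term u u' k.
Proof.
  intros H. apply Rmult_le_pos; [left; apply weight_pos|].
  assert (fl (u - s k) <= fl (u' - s k)) by (apply fl_le; lra). lra.
Qed.

Lemma stair_mono u u' : u <= u' -> stair u <= stair u'.
Proof.
  intros H. assert (0 <= stair u' - stair u); [|lra]. rewrite stair_incr.
  apply Series_nonneg; [intros; apply incr_term_nonneg; exact H | apply ex_incr_term].
Qed.

Lemma stair_jump u v u' j (m : Z) : u < v <= u' -> v - s j = IZR m ->
  weight j <= stair u' - stair u.
Proof.
  intros H Hm. rewrite stair_incr. eapply Rle_trans; [|apply Series_term_le].
  2: intros; apply incr_term_nonneg; lra.
  2: apply ex_incr_term.
  unfold incr_term. rewrite <- (Rmult_1_r (weight j)) at 1.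
  apply Rmult_le_compat_l; [left; apply weight_pos|].
  assert (IZR m <= fl (u' - s j)) by (apply IZR_le, Zfloor_lub; lra).
  assert (fl (u - s j) <= IZR m - 1).
  { destruct (fl_bound (u - s j)). unfold fl in *.
    assert (Hlt : IZR (Zfloor (u - s j)) < IZR m) by lra. apply lt_IZR in Hlt.
    rewrite <- minus_IZR. apply IZR_le. lia. }
  lra.
Qed.

Lemma incr_tail_bound u u' N : u <= u' < u + 1 ->
  Series (fun k => incr_term u u' (N + k)) <= 2 * (/ 2) ^ N.
Proof.
  intros H. eapply Rle_trans.
  - apply (Series_le _ (fun k => (/ 2) ^ N * weight k)).
    + intros k. split; [apply incr_term_nonneg; lra|].
      unfold incr_term, weight at 1. rewrite pow_add, Rmult_assoc.
      apply Rmult_le_compat_l; [left; apply pow_lt; lra|].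
      fold (weight k). rewrite <- (Rmult_1_r (weight k)) at 2.
      apply Rmult_le_compat_l; [left; apply weight_pos|].
      apply fl_diff_le1. lra.
    + apply (ex_series_scal_l _ weight). eexists; apply is_series_weight.
  - rewrite Series_scal_l, (is_series_unique _ _ is_series_weight). lra.
Qed.

Lemma terms_locally_const v N : (forall k (m : Z), v - s k <> IZR m) ->
  exists eta, 0 < eta /\ forall k y, (k <= N)%nat -> Rabs (y - v) < eta ->
    fl (y - s k) = fl (v - s k).
Proof.
  intros H. induction N as [|N [e1 [He1 H1]]].
  - destruct (fl_locally_const (v - s 0)) as [e [He Hc]]; [intros m; apply H|].
    exists e. split; [exact He|]. intros k y Hk Hy. replace k with 0%nat by lia.
    apply Hc. replace (y - s 0%nat - (v - s 0%nat)) with (y - v) by ring. exact Hy.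
  - destruct (fl_locally_const (v - s (S N))) as [e2 [He2 H2]]; [intros m; apply H|].
    exists (Rmin e1 e2). split; [apply Rmin_glb_lt; assumption|].
    pose proof (Rmin_l e1 e2). pose proof (Rmin_r e1 e2).
    intros k y Hk Hy. destruct (Nat.eq_dec k (S N)) as [->|Hne].
    + apply H2. replace (y - s (S N) - (v - s (S N))) with (y - v) by ring. lra.
    + apply H1; [lia | lra].
Qed.

(* Away from the points s k + Z the staircase is continuous: near v the
   first S N terms do not move and the remaining ones weigh at most 2^(1-N). *)
Lemma stair_cont v : (forall k (m : Z), v - s k <> IZR m) ->
  forall d, 0 < d -> exists h, 0 < h /\ stair (v + h) - stair (v - h) < d.
Proof.
  intros H d Hd.
  destruct (pow_lt_1_zero (/ 2)) with (y := d / 4) as [N HN]; [rewrite Rabs_pos_eq; lra | lra|].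
  specialize (HN (S N) ltac:(lia)). rewrite Rabs_pos_eq in HN by (left; apply pow_lt; lra).
  destruct (terms_locally_const v N H) as [eta [Heta Hloc]].
  set (h := Rmin eta (1 / 4) / 2).
  assert (Hh : 0 < h < eta /\ h <= 1 / 8).
  { pose proof (Rmin_l eta (1 / 4)). pose proof (Rmin_r eta (1 / 4)).
    assert (0 < Rmin eta (1 / 4)) by (apply Rmin_glb_lt; lra). unfold h; lra. }
  exists h. split; [lra|].
  rewrite stair_incr, (Series_incr_n _ (S N)) by (lia || apply ex_incr_term).
  rewrite sum_eq_R0.
  - pose proof (incr_tail_bound (v - h) (v + h) (S N) ltac:(lra)). lra.
  - intros k Hk. unfold incr_term.
    rewrite (Hloc k (v + h)), (Hloc k (v - h)); [ring | lia | | lia |];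
      [replace (v - h - v) with (- h) by ring; rewrite Rabs_Ropp |
       replace (v + h - v) with h by ring]; rewrite Rabs_pos_eq; lra.
Qed.

End Staircase.

Definition sup (S : R -> Prop) : R := epsilon (inhabits 0) (is_lub S).

Lemma sup_spec S : bound S -> (exists x, S x) -> is_lub S (sup S).
Proof.
  intros Hb Hne. unfold sup. apply epsilon_spec.
  destruct (completeness S Hb Hne) as [m Hm]. exists m; exact Hm.
Qed.

Lemma sup_le S b : bound S -> (exists x, S x) -> (sup S <= b <-> forall x, S x -> x <= b).
Proof.
  intros Hb Hne. destruct (sup_spec S Hb Hne) as [Hub Hl]. split.
  - intros H x Hx. specialize (Hub x Hx). lra.
  - intros H. apply Hl. exact H.
Qed.

Definition affine (a b a' b' x : R) : R := a' + (x - a) * (b' - a') / (b - a).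

Lemma affine_lo a b a' b' : affine a b a' b' a = a'.
Proof. unfold affine, Rdiv. ring. Qed.

Lemma affine_range a b a' b' x : a <= x <= b -> a' <= b' -> a' <= affine a b a' b' x <= b'.
Proof.
  intros Hx Hab'. destruct (Req_dec a b) as [<-|Hne].
  - replace x with a by lra. rewrite affine_lo. lra.
  - set (t := (x - a) / (b - a)).
    assert (Ht : t * (b - a) = x - a) by (unfold t; field; lra).
    replace (affine a b a' b' x) with (a' + t * (b' - a')) by (unfold affine, t; field; lra).
    assert (0 <= t <= 1) by (split; nra). nra.
Qed.

Lemma affine_strict a b a' b' x y : a < b -> a' < b' -> x < y ->
  affine a b a' b' x < affine a b a' b' y.
Proof.
  intros Hab Hab' Hxy. unfold affine. apply Rplus_lt_compat_l.
  unfold Rdiv. apply Rmult_lt_compat_r; [apply Rinv_0_lt_compat; lra|]. nra.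
Qed.

Lemma affine_interior a b a' b' x : a < b -> a' < b' ->
  (a < x < b <-> a' < affine a b a' b' x < b').
Proof.
  intros Hab Hab'.
  pose proof (affine_lo a b a' b') as Hlo.
  assert (Hhi : affine a b a' b' b = b') by (unfold affine; field; lra).
  pose proof (affine_strict a b a' b') as Hs. split; intros [H1 H2].
  - pose proof (Hs a x Hab Hab' H1). pose proof (Hs x b Hab Hab' H2). lra.
  - split.
    + destruct (Rlt_or_le a x) as [|[Hlt| ->]]; [assumption| |lra].
      pose proof (Hs x a Hab Hab' Hlt). lra.
    + destruct (Rlt_or_le x b) as [|[Hlt| <-]]; [assumption| |lra].
      pose proof (Hs b x Hab Hab' Hlt). lra.
Qed.

Lemma affine_onto a b a' b' z : a < b -> a' < b' -> a' <= z <= b' ->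
  exists x, a <= x <= b /\ affine a b a' b' x = z.
Proof.
  intros Hab Hab' Hz. exists (affine a' b' a b z). split.
  - apply affine_range; lra.
  - unfold affine. field. lra.
Qed.

Lemma affine_shift a b a' b' x c :
  affine (a + c) (b + c) (a' + c) (b' + c) (x + c) = affine a b a' b' x + c.
Proof.
  unfold affine. replace (x + c - (a + c)) with (x - a) by ring.
  replace (b' + c - (a' + c)) with (b' - a') by ring.
  replace (b + c - (a + c)) with (b - a) by ring. ring.
Qed.

Section Inverse.
Context {G : R -> R}.
Hypothesis G_strict : forall x y, x < y -> G x < G y.
Hypothesis G_half : forall x, G (x + / 2) = G x + / 2.

Lemma G_int x k : G (x + IZR k) = G x + IZR k.
Proof. apply shift_int, half_one, G_half. Qed.

Lemma G_unbounded x : (exists u, G u <= x) /\ (exists u, x < G u).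
Proof.
  pose proof (fl_bound (x - G 0)) as Hb. pose proof (G_int 0 (Zfloor (x - G 0))) as H0.
  pose proof (G_int 0 (Zfloor (x - G 0) + 1)) as H1.
  rewrite Rplus_0_l in H0, H1. rewrite plus_IZR in H1. unfold fl in Hb. split.
  - exists (IZR (Zfloor (x - G 0))). lra.
  - exists (IZR (Zfloor (x - G 0) + 1)). rewrite plus_IZR. lra.
Qed.

Definition P (x : R) : R := sup (fun u => G u <= x).

Lemma P_spec x v : P x = v <-> (forall u, u < v -> G u <= x) /\ (forall u, v < u -> x < G u).
Proof.
  assert (Hlub : is_lub (fun u => G u <= x) (P x)).
  { apply sup_spec; [|apply G_unbounded].
    destruct (G_unbounded x) as [_ [u0 Hu0]]. exists u0. intros u Hu.
    destruct (Rle_or_lt u u0) as [|Hlt]; [assumption|]. apply G_strict in Hlt. lra. }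
  destruct Hlub as [Hub Hl]. split.
  - intros <-. split.
    + intros u Hu. destruct (Rle_or_lt (G u) x) as [|Hn]; [assumption|]. exfalso.
      assert (P x <= u); [|lra]. apply Hl. intros u' Hu'.
      destruct (Rle_or_lt u' u) as [|Hlt]; [assumption|]. apply G_strict in Hlt. lra.
    + intros u Hu. destruct (Rlt_or_le x (G u)) as [|Hn]; [assumption|].
      specialize (Hub u Hn). lra.
  - intros [H1 H2]. apply Rle_antisym.
    + apply Hl. intros u Hu. destruct (Rle_or_lt u v) as [|Hlt]; [assumption|].
      specialize (H2 u Hlt). lra.
    + destruct (Rle_or_lt v (P x)) as [|Hlt]; [assumption|]. exfalso.
      assert (Hm : G ((v + P x) / 2) <= x) by (apply H1; lra). specialize (Hub _ Hm). lra.
Qed.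

Lemma P_G v : P (G v) = v.
Proof. apply P_spec. split; intros u Hu; [left|]; apply G_strict; exact Hu. Qed.

Lemma P_mono x y : x <= y -> P x <= P y.
Proof.
  intros H. destruct (Rle_or_lt (P x) (P y)) as [|Hlt]; [assumption|]. exfalso.
  destruct (proj1 (P_spec x (P x)) eq_refl) as [Hx _].
  destruct (proj1 (P_spec y (P y)) eq_refl) as [_ Hy].
  assert (G ((P x + P y) / 2) <= x) by (apply Hx; lra).
  assert (y < G ((P x + P y) / 2)) by (apply Hy; lra). lra.
Qed.

Lemma P_lt_inv x y : P x < P y -> x < y.
Proof.
  intros H. destruct (Rlt_or_le x y) as [|Hle]; [assumption|].
  apply P_mono in Hle. lra.
Qed.

Lemma P_half x : P (x + / 2) = P x + / 2.
Proof.
  destruct (proj1 (P_spec x (P x)) eq_refl) as [H1 H2]. apply P_spec. split; intros u Hu;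
    replace u with (u - / 2 + / 2) by ring; rewrite G_half;
    [assert (G (u - / 2) <= x) by (apply H1; lra) | assert (x < G (u - / 2)) by (apply H2; lra)];
    lra.
Qed.

Lemma P_int x k : P (x + IZR k) = P x + IZR k.
Proof. apply shift_int, half_one, P_half. Qed.

Lemma P_cont : continuity P.
Proof.
  intros x eps Heps. set (v := P x).
  destruct (proj1 (P_spec x v) eq_refl) as [H1 H2].
  assert (Ha : G (v - eps / 2) < x).
  { apply Rlt_le_trans with (G (v - eps / 4)); [apply G_strict; lra | apply H1; lra]. }
  assert (Hb : x < G (v + eps / 2)) by (apply H2; lra).
  exists (Rmin (x - G (v - eps / 2)) (G (v + eps / 2) - x)). split; [apply Rmin_glb_lt; lra|].
  intros y [_ Hy]. simpl in *. unfold R_dist in *.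
  pose proof (Rmin_l (x - G (v - eps / 2)) (G (v + eps / 2) - x)).
  pose proof (Rmin_r (x - G (v - eps / 2)) (G (v + eps / 2) - x)).
  assert (Hy1 : G (v - eps / 2) < y < G (v + eps / 2))
    by (revert Hy; unfold Rabs; destruct Rcase_abs; intros; lra).
  destruct (proj1 (P_spec y (P y)) eq_refl) as [K1 K2].
  assert (v - eps / 2 <= P y).
  { destruct (Rle_or_lt (v - eps / 2) (P y)) as [|Hlt]; [assumption|]. apply K2 in Hlt. lra. }
  assert (P y <= v + eps / 2).
  { destruct (Rle_or_lt (P y) (v + eps / 2)) as [|Hlt]; [assumption|]. apply K1 in Hlt. lra. }
  unfold Rabs; destruct Rcase_abs; lra.
Qed.

Lemma P_bound x : Rabs (P x - x) <= Rabs (P 0) + 1.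
Proof.
  pose proof (fl_bound x) as Hx. pose proof (P_int 0 (Zfloor x)) as H0.
  pose proof (P_int 0 (Zfloor x + 1)) as H1. rewrite plus_IZR in H1.
  rewrite Rplus_0_l in H0, H1. unfold fl in Hx.
  assert (P (IZR (Zfloor x)) <= P x) by (apply P_mono; lra).
  assert (P x <= P (IZR (Zfloor x) + 1)) by (apply P_mono; lra).
  unfold Rabs in *; repeat destruct Rcase_abs; lra.
Qed.

(* The fibre of P over v is the interval [fib_lo v, fib_hi v] = [G(v-), G(v+)]. *)
Definition fib_lo (v : R) : R := sup (fun y => exists u, u < v /\ y = G u).
Definition fib_hi (v : R) : R := - sup (fun y => exists u, v < u /\ y = - G u).

Lemma fib_lo_spec v x : fib_lo v <= x <-> forall u, u < v -> G u <= x.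
Proof.
  unfold fib_lo. rewrite sup_le.
  - split; intros H; [intros u Hu; apply H; exists u; auto | intros y [u [Hu ->]]; auto].
  - exists (G v). intros y [u [Hu ->]]. left; apply G_strict; exact Hu.
  - exists (G (v - 1)), (v - 1). split; [lra | reflexivity].
Qed.

Lemma fib_hi_spec v x : x <= fib_hi v <-> forall u, v < u -> x <= G u.
Proof.
  unfold fib_hi. assert (Hs : forall s, x <= - s <-> s <= - x) by (intros; split; intros; lra).
  rewrite Hs, sup_le.
  - split; intros H u Hu; [|destruct Hu as [u' [Hu ->]]; specialize (H u' Hu); lra].
    specialize (H (- G u) (ex_intro _ u (conj Hu eq_refl))). lra.
  - exists (- G v). intros y [u [Hu ->]]. apply G_strict in Hu. lra.
  - exists (- G (v + 1)), (v + 1). split; [lra | reflexivity].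
Qed.

Lemma fibre v x : P x = v <-> fib_lo v <= x <= fib_hi v.
Proof.
  rewrite P_spec, fib_lo_spec, fib_hi_spec. split; intros [H1 H2]; split; try exact H1.
  - intros u Hu. left. apply H2. exact Hu.
  - intros u Hu. apply Rle_lt_trans with (G ((v + u) / 2)); [apply H2; lra | apply G_strict; lra].
Qed.

Lemma fib_lo_le_hi v : fib_lo v <= fib_hi v.
Proof. pose proof (proj1 (fibre v (G v)) (P_G v)). lra. Qed.

Lemma P_fib_lo v : P (fib_lo v) = v.
Proof. apply fibre. pose proof (fib_lo_le_hi v). lra. Qed.

Lemma P_fib_hi v : P (fib_hi v) = v.
Proof. apply fibre. pose proof (fib_lo_le_hi v). lra. Qed.

Lemma in_fibre x : fib_lo (P x) <= x <= fib_hi (P x).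
Proof. apply fibre. reflexivity. Qed.

Lemma fibre_shift c : (forall x, P (x + c) = P x + c) ->
  forall v, fib_lo (v + c) = fib_lo v + c /\ fib_hi (v + c) = fib_hi v + c.
Proof.
  intros Hc v.
  assert (Hf : forall x, P x = v + c <-> fib_lo v + c <= x <= fib_hi v + c).
  { intros x. pose proof (Hc (x - c)) as E. replace (x - c + c) with x in E by ring.
    rewrite E. assert (Hv : P (x - c) + c = v + c <-> P (x - c) = v) by (split; intros; lra).
    rewrite Hv, fibre. split; intros; lra. }
  pose proof (fib_lo_le_hi v). pose proof (fib_lo_le_hi (v + c)).
  pose proof (proj1 (Hf _) (P_fib_lo (v + c))). pose proof (proj1 (Hf _) (P_fib_hi (v + c))).
  pose proof (proj1 (fibre _ _) (proj2 (Hf (fib_lo v + c)) ltac:(lra))).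
  pose proof (proj1 (fibre _ _) (proj2 (Hf (fib_hi v + c)) ltac:(lra))).
  split; lra.
Qed.

Section Jumps.
Context {Jump : R -> Prop}.
Hypothesis G_cont : forall v, ~ Jump v ->
  forall d, 0 < d -> exists u' u, u' < v < u /\ G u - G u' < d.
Hypothesis G_jump : forall v, Jump v ->
  exists c, 0 < c /\ forall u' u, u' < v <= u -> c <= G u - G u'.

Lemma nondegenerate_iff v : fib_lo v < fib_hi v <-> Jump v.
Proof.
  split.
  - intros H. apply NNPP. intros Hn.
    destruct (G_cont v Hn (fib_hi v - fib_lo v)) as [u' [u [Hu Hd]]]; [lra|].
    pose proof (proj1 (fib_lo_spec v _) (Rle_refl _) u' (proj1 Hu)).
    pose proof (proj1 (fib_hi_spec v _) (Rle_refl _) u (proj2 Hu)). lra.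
  - intros HS. destruct (G_jump v HS) as [c [Hc Hj]].
    assert (fib_lo v <= G v - c).
    { apply fib_lo_spec. intros u Hu. specialize (Hj u v ltac:(lra)). lra. }
    pose proof (proj1 (fibre v (G v)) (P_G v)). lra.
Qed.

Lemma degenerate v : ~ Jump v -> fib_lo v = fib_hi v.
Proof.
  intros Hn. destruct (Rle_lt_or_eq_dec _ _ (fib_lo_le_hi v)) as [Hlt|]; [|assumption].
  apply nondegenerate_iff in Hlt. contradiction.
Qed.

Lemma Jump_int v k : Jump (v + IZR k) <-> Jump v.
Proof.
  rewrite <- !nondegenerate_iff. destruct (fibre_shift _ (fun x => P_int x k) v) as [-> ->].
  split; intros; lra.
Qed.

Section Lift.
Context {tau : R}.
Hypothesis Jump_tau : forall v, Jump (v + tau) <-> Jump v.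

Definition F (x : R) : R :=
  affine (fib_lo (P x)) (fib_hi (P x)) (fib_lo (P x + tau)) (fib_hi (P x + tau)) x.

Lemma PF x : P (F x) = P x + tau.
Proof.
  apply fibre. apply affine_range; [apply in_fibre | apply fib_lo_le_hi].
Qed.

Lemma F_strict x y : x < y -> F x < F y.
Proof.
  intros H. destruct (Rle_lt_or_eq_dec _ _ (P_mono x y (Rlt_le _ _ H))) as [Hlt|Heq].
  - apply P_lt_inv. rewrite !PF. lra.
  - (* x and y lie in the same fibre, which is then nondegenerate *)
    assert (Hs : Jump (P x)).
    { apply nondegenerate_iff. pose proof (in_fibre x). pose proof (in_fibre y).
      rewrite Heq in *. lra. }
    unfold F. rewrite <- Heq. apply affine_strict; [apply nondegenerate_iff; exact Hs | | exact H].
    apply nondegenerate_iff, Jump_tau, Hs.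
Qed.

Lemma F_half x : F (x + / 2) = F x + / 2.
Proof.
  unfold F. rewrite P_half. replace (P x + / 2 + tau) with (P x + tau + / 2) by ring.
  destruct (fibre_shift _ P_half (P x)) as [-> ->].
  destruct (fibre_shift _ P_half (P x + tau)) as [-> ->].
  apply affine_shift.
Qed.

Lemma F_surj z : exists x, F x = z.
Proof.
  set (v := P z - tau). assert (Hv : v + tau = P z) by (unfold v; ring).
  pose proof (in_fibre z) as Hz.
  destruct (classic (Jump v)) as [Hs|Hn].
  - destruct (affine_onto (fib_lo v) (fib_hi v) (fib_lo (v + tau)) (fib_hi (v + tau)) z)
      as [x [Hx Hxz]]; [apply nondegenerate_iff; exact Hs | apply nondegenerate_iff, Jump_tau, Hs |
                        rewrite Hv; exact Hz |].
    exists x. unfold F. replace (P x) with v by (symmetry; apply fibre; exact Hx). exact Hxz.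
  - (* degenerate fibres: z is the single point over v + tau *)
    exists (fib_lo v). unfold F. rewrite P_fib_lo, affine_lo.
    rewrite <- Hv in Hz. rewrite (degenerate _ (fun H => Hn (proj1 (Jump_tau v) H))) in *. lra.
Qed.

Lemma F_circle_homeo : circle_homeo_plus F.
Proof.
  split; [apply mono_surj_cont; [exact F_strict | exact F_surj]|].
  split; [exact F_strict | apply half_one, F_half].
Qed.

Lemma P_iter n x : P (Nat.iter n F x) = P x + INR n * tau.
Proof.
  induction n as [|n IH]; [simpl; ring|].
  change (Nat.iter (S n) F x) with (F (Nat.iter n F x)). rewrite PF, IH, S_INR. ring.
Qed.

(* Since P is at bounded distance from the identity and P F^n = P + n tau,
   the rotation number of F is tau. *)
Lemma F_rot : rot_num F tau.
Proof.
  intros x. set (B := Rabs (P 0) + 1).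
  assert (HB : 0 < B) by (unfold B; pose proof (Rabs_pos (P 0)); lra).
  intros eps Heps. destruct (nat_above (2 * B / eps)) as [N [_ HN]].
  { apply Rdiv_le_0_compat; lra. }
  exists N. intros n Hn. unfold R_dist.
  set (y := Nat.iter (S n) F x). pose proof (P_iter (S n) x) as Hy. fold y in Hy.
  pose proof (P_bound y) as Hby. pose proof (P_bound x) as Hbx. fold B in Hby, Hbx.
  assert (HSn : INR N < INR (S n)) by (apply lt_INR; lia).
  assert (Habs : Rabs (y - x - INR (S n) * tau) <= 2 * B).
  { replace (y - x - INR (S n) * tau) with (- (P y - y) + (P x - x)) by (rewrite Hy; ring).
    eapply Rle_trans; [apply Rabs_triang|]. rewrite Rabs_Ropp. lra. }
  assert (Hn0 : 0 < INR (S n)) by (apply lt_0_INR; lia).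
  replace ((y - x) / INR (S n) - tau) with ((y - x - INR (S n) * tau) / INR (S n)) by (field; lra).
  unfold Rdiv. rewrite Rabs_mult, Rabs_inv, (Rabs_pos_eq (INR (S n))) by lra.
  apply Rmult_lt_reg_r with (INR (S n)); [exact Hn0|].
  rewrite Rmult_assoc, Rinv_l, Rmult_1_r by lra.
  assert (Hq : 2 * B / eps * eps = 2 * B) by (field; lra).
  assert (2 * B / eps * eps < INR (S n) * eps) by (apply Rmult_lt_compat_r; lra). lra.
Qed.

Lemma F_interior x :
  fib_lo (P x) < x < fib_hi (P x) <-> fib_lo (P x + tau) < F x < fib_hi (P x + tau).
Proof.
  destruct (classic (Jump (P x))) as [Hs|Hn].
  - apply affine_interior;
      [apply nondegenerate_iff; exact Hs | apply nondegenerate_iff, Jump_tau, Hs].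
  - rewrite (degenerate _ Hn), (degenerate _ (fun H => Hn (proj1 (Jump_tau _) H))).
    split; intros; lra.
Qed.

Section Minimal.
Hypothesis Hirr : irrational tau.
Context {phi : R}.
Hypothesis Jump_phi : Jump phi.

Lemma Jump_orbit n k : Jump (phi + INR n * tau + IZR k).
Proof.
  apply Jump_int. induction n as [|n IH]; [simpl; rewrite Rmult_0_l, Rplus_0_r; exact Jump_phi|].
  rewrite S_INR. replace (phi + (INR n + 1) * tau) with (phi + INR n * tau + tau) by ring.
  apply Jump_tau, IH.
Qed.

Lemma Jump_dense p q : P p < P q -> exists v, Jump v /\ P p < v < P q.
Proof.
  intros H. destruct (dense_orbit tau phi (P p) (P q) Hirr H) as [n [k Hk]].
  exists (phi + INR n * tau + IZR k). split; [apply Jump_orbit | exact Hk].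
Qed.

Definition E (x : R) : Prop := forall eps, 0 < eps -> P (x - eps) < P (x + eps).

Lemma E_char x : E x <-> ~ (fib_lo (P x) < x < fib_hi (P x)).
Proof.
  split.
  - intros HE [Ha Hb]. set (e := Rmin (x - fib_lo (P x)) (fib_hi (P x) - x)).
    assert (He : 0 < e) by (apply Rmin_glb_lt; lra).
    pose proof (Rmin_l (x - fib_lo (P x)) (fib_hi (P x) - x)) as He1.
    pose proof (Rmin_r (x - fib_lo (P x)) (fib_hi (P x) - x)) as He2. fold e in He1, He2.
    assert (P (x - e) = P x) by (apply fibre; lra).
    assert (P (x + e) = P x) by (apply fibre; lra).
    specialize (HE e He). lra.
  - intros Hn eps Heps.
    assert (H1 : P (x - eps) <= P x) by (apply P_mono; lra).
    assert (H2 : P x <= P (x + eps)) by (apply P_mono; lra).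
    destruct (Rle_lt_or_eq_dec _ _ H1) as [|E1]; [lra|].
    destruct (Rle_lt_or_eq_dec _ _ H2) as [|E2]; [lra|].
    exfalso. apply Hn. apply fibre in E1. symmetry in E2. apply fibre in E2. lra.
Qed.

Lemma E_fib_lo v : E (fib_lo v).
Proof. apply E_char. rewrite P_fib_lo. lra. Qed.

Lemma E_fib_hi v : E (fib_hi v).
Proof. apply E_char. rewrite P_fib_hi. lra. Qed.

Lemma not_E_interior v y : fib_lo v < y < fib_hi v -> ~ E y.
Proof.
  intros H HE. apply E_char in HE. replace (P y) with v in HE by (symmetry; apply fibre; lra).
  contradiction.
Qed.

Lemma E_shift c : (forall x, P (x + c) = P x + c) -> forall x, E (x + c) <-> E x.
Proof.
  intros Hc x. unfold E.
  assert (Hs : forall e, P (x + c - e) = P (x - e) + c /\ P (x + c + e) = P (x + e) + c).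
  { intros e. rewrite <- !Hc. split; f_equal; ring. }
  split; intros H eps Heps; specialize (H eps Heps); destruct (Hs eps) as [H1 H2];
    [rewrite H1, H2 in H | rewrite H1, H2]; lra.
Qed.

Lemma E_circ : circ_set E.
Proof. intros x. rewrite (E_shift 1 (fun x => P_int x 1)). tauto. Qed.

Lemma E_half x : E (x + / 2) <-> E x.
Proof. apply E_shift, P_half. Qed.

Lemma E_closed : closed_set E.
Proof.
  intros z Hz. apply E_char. intros [Ha Hb].
  set (e := Rmin (z - fib_lo (P z)) (fib_hi (P z) - z)).
  assert (He : 0 < e) by (apply Rmin_glb_lt; lra).
  pose proof (Rmin_l (z - fib_lo (P z)) (fib_hi (P z) - z)) as He1.
  pose proof (Rmin_r (z - fib_lo (P z)) (fib_hi (P z) - z)) as He2. fold e in He1, He2.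
  destruct (Hz e He) as [y [Hy Hyz]].
  apply (not_E_interior (P z) y); [|exact Hy].
  revert Hyz; unfold Rabs; destruct Rcase_abs; intros; lra.
Qed.

Lemma E_inv : invariant F E.
Proof.
  intros x. rewrite !E_char, PF, F_interior. tauto.
Qed.

(* Every nonempty closed invariant set contains E, by density of the orbits
   of the rotation P F P^-1. *)
Lemma E_sub (D : R -> Prop) : circ_set D -> closed_set D -> (exists x, D x) -> invariant F D ->
  forall z, E z -> D z.
Proof.
  intros Hc Hcl [d Hd] Hi z Hz. apply Hcl. intros eps Heps.
  destruct (dense_orbit tau (P d) (P (z - eps)) (P (z + eps)) Hirr (Hz eps Heps)) as [n [k Hk]].
  rewrite <- P_iter, <- P_int in Hk. destruct Hk as [H1 H2].
  apply P_lt_inv in H1. apply P_lt_inv in H2.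
  exists (Nat.iter n F d + IZR k). split.
  - apply periodic_int; [intros y; symmetry; apply Hc|].
    clear H1 H2. induction n as [|n IH]; [exact Hd | apply (Hi (Nat.iter n F d)), IH].
  - unfold Rabs; destruct Rcase_abs; lra.
Qed.

Lemma minimal_is_E (C : R -> Prop) : minimal_set F C -> C = E.
Proof.
  intros [Hc [Hcl [Hne [Hi Hmin]]]].
  assert (HEC : forall x, E x -> C x) by (apply E_sub; assumption).
  assert (HCE : forall x, C x -> E x).
  { apply (Hmin E E_circ E_closed (ex_intro _ _ (E_fib_lo 0)) E_inv HEC). }
  apply functional_extensionality. intros x. apply propositional_extensionality. split; auto.
Qed.

Lemma fibre_between p q : P p < P q ->
  exists v, Jump v /\ p < fib_lo v /\ fib_hi v < q.
Proof.
  intros H. destruct (Jump_dense p q H) as [v [Hv [H1 H2]]].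
  exists v. split; [exact Hv|].
  rewrite <- (P_fib_lo v) in H1. rewrite <- (P_fib_hi v) in H2.
  split; apply P_lt_inv; assumption.
Qed.

Lemma E_cantor : cantor_set E.
Proof.
  split; [exact E_circ|]. split; [exact E_closed|]. split; [exists (fib_lo 0); apply E_fib_lo|].
  split.
  - (* no arc: either P is constant on [a,b], or [a,b] contains a fibre *)
    intros a b Hab. destruct (Rle_lt_or_eq_dec _ _ (P_mono a b (Rlt_le _ _ Hab))) as [Hlt|Heq].
    + destruct (fibre_between a b Hlt) as [v [Hv [H1 H2]]].
      apply nondegenerate_iff in Hv.
      exists ((fib_lo v + fib_hi v) / 2). split; [lra|]. apply (not_E_interior v). lra.
    + exists ((a + b) / 2). split; [lra|]. intros HE. specialize (HE ((b - a) / 2) ltac:(lra)).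
      replace ((a + b) / 2 - (b - a) / 2) with a in HE by field.
      replace ((a + b) / 2 + (b - a) / 2) with b in HE by field. lra.
  - (* perfect: an endpoint of a fibre lies eps-close to each point of E *)
    intros x Hx eps Heps. specialize (Hx eps Heps).
    destruct (Rlt_or_le (P x) (P (x + eps))) as [Hlt|Hle].
    + destruct (fibre_between x (x + eps) Hlt) as [v [Hv [H1 H2]]].
      pose proof (fib_lo_le_hi v).
      exists (fib_hi v). split; [apply E_fib_hi|]. split; [lra|]. rewrite Rabs_pos_eq; lra.
    + destruct (fibre_between (x - eps) x ltac:(lra)) as [v [Hv [H1 H2]]].
      pose proof (fib_lo_le_hi v).
      exists (fib_lo v). split; [apply E_fib_lo|]. split; [lra|]. rewrite Rabs_left; lra.
Qed.

Lemma gap_fibre p q : gap E p q -> P p = P q /\ Jump (P p).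
Proof.
  intros [Hpq [Hp [Hq Hg]]].
  assert (HPq : P p = P q).
  { destruct (Rle_lt_or_eq_dec _ _ (P_mono p q (Rlt_le _ _ Hpq))) as [Hlt|]; [|assumption].
    exfalso. destruct (fibre_between p q Hlt) as [v [_ [H1 H2]]].
    pose proof (fib_lo_le_hi v). apply (Hg (fib_lo v)); [lra | apply E_fib_lo]. }
  split; [exact HPq|]. apply nondegenerate_iff.
  pose proof (in_fibre p). pose proof (in_fibre q). rewrite <- HPq in *. lra.
Qed.

Lemma fibre_gap v : Jump v -> gap E (fib_lo v) (fib_hi v).
Proof.
  intros Hv. apply nondegenerate_iff in Hv.
  split; [exact Hv|]. split; [apply E_fib_lo|]. split; [apply E_fib_hi|].
  intros y Hy. apply (not_E_interior v y Hy).
Qed.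

Lemma P_cantor_function : cantor_function E P.
Proof.
  split; [exact P_cont|]. split; [exact P_mono|]. split; [exact (fun x => P_int x 1)|].
  intros t1 t2. split.
  - intros [k Hk]. assert (Hv : P (t1 + IZR k) = P t2) by (rewrite P_int; lra).
    destruct (Req_dec (t1 + IZR k) t2) as [Heq|Hne]; [left; exists k; lra|right].
    pose proof (in_fibre t2) as H2.
    pose proof (in_fibre (t1 + IZR k)) as H1. rewrite Hv in H1.
    exists k, 0%Z, (fib_lo (P t2)), (fib_hi (P t2)). rewrite Rplus_0_r.
    split; [apply fibre_gap, nondegenerate_iff; lra | split; assumption].
  - intros [[k Hk]|[k1 [k2 [a [b [Hg [H1 H2]]]]]]].
    + exists k. replace t2 with (t1 + IZR k) by lra. rewrite P_int. ring.
    + destruct (gap_fibre a b Hg) as [Hab _].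
      assert (P a <= P (t1 + IZR k1) <= P b) by (split; apply P_mono; lra).
      assert (P a <= P (t2 + IZR k2) <= P b) by (split; apply P_mono; lra).
      rewrite !P_int in *. exists (k1 - k2)%Z. rewrite minus_IZR. lra.
Qed.

Lemma accessible_image y : (exists a, accessible E a /\ eqT (P a) y) <-> Jump y.
Proof.
  split.
  - intros [a [[b Hg] [k Hk]]]. replace y with (P a + IZR k) by lra. apply Jump_int.
    destruct Hg as [Hg|Hg]; destruct (gap_fibre _ _ Hg) as [Heq Hs];
      [exact Hs | rewrite <- Heq; exact Hs].
  - intros Hy. exists (fib_lo y). split.
    + exists (fib_hi y). left. apply fibre_gap, Hy.
    + rewrite P_fib_lo. apply eqT_refl.
Qed.

(* F is not conjugate to a rotation: a conjugacy H would let some iterate of F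
   carry a point of the nondegenerate fibre over phi into the same fibre,
   forcing q tau to be an integer. *)
Lemma F_not_conj : ~ conj_to_rotation F.
Proof.
  intros [H [alpha [Hh Hconj]]].
  pose proof (proj2 (nondegenerate_iff phi) Jump_phi) as Hphi.
  set (a := fib_lo phi) in *. set (b := fib_hi phi) in *.
  assert (Hd : 0 < Rabs (H b - H a)).
  { apply Rabs_pos_lt. destruct Hh as [_ [[Hm _]|[Hm _]]]; specialize (Hm a b Hphi); lra. }
  destruct (dirichlet alpha (Rabs (H b - H a)) Hd) as [q [m [Hq Ha]]].
  destruct (realise_displacement H a b (INR q * alpha - IZR m)) as [x [y [Hx [Hy Hxy]]]];
    [apply (proj1 Hh) | lra | lra |].
  assert (Hit : forall n z, eqT (H (Nat.iter n F z)) (H z + INR n * alpha)).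
  { induction n as [|n IH]; intros z; [exists 0%Z; simpl; ring|].
    change (Nat.iter (S n) F z) with (F (Nat.iter n F z)).
    eapply eqT_trans; [apply Hconj|]. destruct (IH z) as [k Hk]. exists k. rewrite S_INR. lra. }
  assert (Hq' : eqT (Nat.iter q F x) y).
  { apply (homeo_inj H Hh). eapply eqT_trans; [apply Hit|]. exists (- m)%Z. rewrite opp_IZR. lra. }
  destruct Hq' as [k Hk].
  assert (Hpx : P x = phi) by (apply fibre; exact Hx).
  assert (Hpy : P y = phi) by (apply fibre; exact Hy).
  replace y with (Nat.iter q F x + IZR k) in Hpy by lra.
  rewrite P_int, P_iter, Hpx in Hpy.
  apply (irrational_mult_nonint tau q (- k) Hirr Hq). rewrite opp_IZR. lra.
Qed.

Lemma F_denjoy : denjoy_map F.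
Proof.
  split; [exact F_circle_homeo|]. split; [exists tau; split; [exact F_rot | exact Hirr]|].
  exact F_not_conj.
Qed.

End Minimal.
End Lift.
End Jumps.
End Inverse.

Arguments P : clear implicits.
Arguments F : clear implicits.

Definition enum (k : nat) : Z :=
  if Nat.even k then Z.of_nat (k / 2) else (- Z.of_nat ((k + 1) / 2))%Z.

Lemma enum_surj (n : Z) : exists k, enum k = n.
Proof.
  destruct (Z_le_gt_dec 0 n) as [Hn|Hn].
  - exists (2 * Z.to_nat n)%nat. unfold enum. rewrite Nat.even_mul.
    change (Nat.even 2) with true. cbn [orb].
    rewrite Nat.mul_comm, Nat.div_mul by lia. lia.
  - exists (S (2 * (Z.to_nat (- n) - 1))). unfold enum.
    rewrite Nat.even_succ, Nat.odd_mul. change (Nat.odd 2) with false. cbn [andb].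
    replace (S (2 * (Z.to_nat (- n) - 1)) + 1)%nat with (Z.to_nat (- n) * 2)%nat by lia.
    rewrite Nat.div_mul by lia. lia.
Qed.

(* The concrete increasing map G, commuting with the half-turn, whose jumps
   sit exactly over the two orbits phi + Z tau and phi + 1/2 + Z tau, i.e.
   over the points v with 2 v = 2 (phi + n tau) mod 1. *)
Section Construction.
Variables phi tau : R.

Definition orbit_pt (k : nat) : R := 2 * phi + 2 * IZR (enum k) * tau.
Definition orbit_frac (k : nat) : R := orbit_pt k - fl (orbit_pt k).

Lemma orbit_frac_bd k : 0 <= orbit_frac k < 1.
Proof. unfold orbit_frac. pose proof (fl_bound (orbit_pt k)). lra. Qed.

Definition staircase (v : R) : R := (2 * v + stair orbit_frac (2 * v)) / 6.

Definition jump_pt (v : R) : Prop := exists n : Z, eqT (2 * (phi + IZR n * tau)) (2 * v).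

Lemma staircase_strict x y : x < y -> staircase x < staircase y.
Proof.
  intros H. unfold staircase.
  assert (stair orbit_frac (2 * x) <= stair orbit_frac (2 * y))
    by (apply stair_mono; [exact orbit_frac_bd | lra]).
  lra.
Qed.

Lemma staircase_half x : staircase (x + / 2) = staircase x + / 2.
Proof.
  unfold staircase. replace (2 * (x + / 2)) with (2 * x + 1) by field.
  rewrite stair_shift by exact orbit_frac_bd. field.
Qed.

Lemma staircase_cont v : ~ jump_pt v ->
  forall d, 0 < d -> exists u' u, u' < v < u /\ staircase u - staircase u' < d.
Proof.
  intros Hn d Hd.
  destruct (stair_cont orbit_frac orbit_frac_bd (2 * v)) with (d := d) as [h [Hh Hs]];
    [|exact Hd|].
  { intros k m Hkm. apply Hn. exists (enum k), (m - Zfloor (orbit_pt k))%Z.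
    rewrite minus_IZR. unfold orbit_frac, orbit_pt, fl in *. lra. }
  pose proof (Rmin_l h d). pose proof (Rmin_r h d). set (h' := Rmin h d) in *.
  assert (0 < h') by (apply Rmin_glb_lt; lra).
  exists (v - h' / 2), (v + h' / 2). split; [lra|]. unfold staircase.
  replace (2 * (v + h' / 2)) with (2 * v + h') by field.
  replace (2 * (v - h' / 2)) with (2 * v - h') by field.
  assert (stair orbit_frac (2 * v + h') <= stair orbit_frac (2 * v + h))
    by (apply stair_mono; [exact orbit_frac_bd | lra]).
  assert (stair orbit_frac (2 * v - h) <= stair orbit_frac (2 * v - h'))
    by (apply stair_mono; [exact orbit_frac_bd | lra]).
  lra.
Qed.

Lemma staircase_jump v : jump_pt v ->
  exists c, 0 < c /\ forall u' u, u' < v <= u -> c <= staircase u - staircase u'.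
Proof.
  intros [n [m Hm]]. destruct (enum_surj n) as [k Hk].
  exists (weight k / 6). split; [pose proof (weight_pos k); lra|].
  intros u' u Hu.
  assert (weight k <= stair orbit_frac (2 * u) - stair orbit_frac (2 * u')).
  { apply (stair_jump orbit_frac orbit_frac_bd (2 * u') (2 * v) (2 * u) k
                      (m + Zfloor (orbit_pt k))); [lra|].
    unfold orbit_frac, orbit_pt, fl. rewrite plus_IZR, Hk. lra. }
  unfold staircase. lra.
Qed.

Lemma jump_pt_tau v : jump_pt (v + tau) <-> jump_pt v.
Proof.
  split; intros [n [m H]]; [exists (n - 1)%Z, m | exists (n + 1)%Z, m];
    rewrite ?minus_IZR, ?plus_IZR; simpl; nra.
Qed.

Lemma jump_pt_phi : jump_pt phi.
Proof. exists 0%Z, 0%Z. simpl. ring. Qed.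

Lemma jump_pt_orbits v : jump_pt v <->
  exists n : Z, eqT (phi + IZR n * tau) v \/ eqT (phi + / 2 + IZR n * tau) v.
Proof.
  split.
  - intros [n [m Hm]]. exists n.
    destruct (Z_modulo_2 m) as [[j ->]|[j ->]]; [left | right]; exists j;
      rewrite ?plus_IZR, mult_IZR in Hm; simpl in Hm; lra.
  - intros [n [[k Hk]|[k Hk]]]; exists n; [exists (2 * k)%Z | exists (2 * k + 1)%Z];
      rewrite ?plus_IZR, mult_IZR; simpl; lra.
Qed.

End Construction.

Theorem proposition3p3 (tau phi : R) (Htau : irrational tau) :
  let phi' := phi + / 2 in
  exists F : R -> R,
    denjoy_map F /\
    (* (a) Z_2-equivariance *)
    (forall x, eqT (F (x + / 2)) (F x + / 2)) /\
    (* (b) rotation number is tau mod 1 *)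
    (exists r, rot_num F r /\ eqT r tau) /\
    (* (c) *)
    (forall C : R -> Prop, minimal_set F C ->
       cantor_set C /\
       (forall x, C (x + / 2) <-> C x) /\
       exists P : R -> R,
         cantor_function C P /\
         (forall x, eqT (P (x + / 2)) (P x + / 2)) /\
         (forall y, (exists a, accessible C a /\ eqT (P a) y) <->
            exists n : Z, eqT (phi + IZR n * tau) y \/
                          eqT (phi' + IZR n * tau) y) /\
         (forall x, eqT (P (F x)) (P x + tau))).
Proof.
  intros phi'.
  pose proof (staircase_strict phi tau) as Gs.
  pose proof (staircase_half phi tau) as Gh.
  pose proof (staircase_cont phi tau) as Gc.
  pose proof (staircase_jump phi tau) as Gj.
  pose proof (jump_pt_tau phi tau) as Jt.
  pose proof (jump_pt_phi phi tau) as Jphi.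
  set (G := staircase phi tau) in *.
  exists (F G tau). split; [|split; [|split]].
  - exact (F_denjoy Gs Gh Gc Gj Jt Htau Jphi).
  - intros x. rewrite (F_half Gs Gh). apply eqT_refl.
  - exists tau. split; [exact (F_rot Gs Gh) | apply eqT_refl].
  - intros C HC. rewrite (minimal_is_E Gs Gh Gc Gj Jt Htau C HC).
    split; [exact (E_cantor Gs Gh Gc Gj Jt Htau Jphi)|].
    split; [exact (E_half Gs Gh)|].
    exists (P G). split; [exact (P_cantor_function Gs Gh Gc Gj Jt Htau Jphi)|].
    split; [intros x; rewrite (P_half Gs Gh); apply eqT_refl|].
    split.
    + intros y. rewrite (accessible_image Gs Gh Gc Gj Jt Htau Jphi), jump_pt_orbits. reflexivity.
    + intros x. rewrite (PF (tau := tau) Gs Gh). apply eqT_refl.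
Qed.
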